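(* Let $G$ be the graph on vertex set $\{a,b,p,q,x,z\}$ with edges $\{a,b\},\{a,p\},\{a,x\},\{b,x\},\{b,q\},\{x,p\},\{x,q\},\{p,z\},\{q,z\}$, and let $I(G)\subseteq K[a,b,p,q,x,z]$ ($K$ a field) be its edge ideal. Then $I(G)^s$ has linear quotients for all $s\ge 2$.
   Context: The edge ideal is generated by the monomials $uv$ for the edges $\{u,v\}$ of $G$. A monomial ideal generated in a single degree has linear quotients if its minimal monomial generators can be ordered $u_1>\cdots>u_r$ so that each colon ideal $(u_1,\ldots,u_i):u_{i+1}$, $1\le i<r$, is generated by a subset of the variables. *)

From mathcomp Require Import all_boot all_algebra.
From mathcomp Require Import mpoly.
Set Implicit Arguments. Unset Strict Implicit. Unset Printing Implicit Defensive.
Import GRing.Theory.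
Local Open Scope ring_scope.

Definition in_ideal (K : fieldType) (n : nat) (gs : seq {mpoly K[n]})
    (f : {mpoly K[n]}) : Prop :=
  exists c : 'I_(size gs) -> {mpoly K[n]},
    f = \sum_(i < size gs) c i * gs`_i.

Definition mon_dvd (n : nat) (m1 m2 : 'X_{1..n}) : bool :=
  [forall i : 'I_n, m1 i <= m2 i]%N.

Definition min_mon_gen (K : fieldType) (n : nat) (gs : seq {mpoly K[n]})
    (m : 'X_{1..n}) : Prop :=
  in_ideal gs 'X_[m] /\
  forall m' : 'X_{1..n}, in_ideal gs 'X_[m'] -> mon_dvd m' m -> m' = m.

(* The ideal generated by gs has linear quotients: its minimal monomial
   generators can be ordered u_1,...,u_r such that each colon ideal
   (u_1,...,u_i) : u_{i+1}, 1 <= i < r, is generated by a subset of the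
   variables.  (0-indexed: u = [:: u_1; ...; u_r], u_{i+1} = u`_i.) *)
Definition has_linear_quotients (K : fieldType) (n : nat)
    (gs : seq {mpoly K[n]}) : Prop :=
  exists u : seq 'X_{1..n},
    uniq u /\ (forall m, m \in u <-> min_mon_gen gs m) /\
    forall i : nat, (1 <= i < size u)%N ->
      exists S : {set 'I_n}, forall f : {mpoly K[n]},
        in_ideal [seq 'X_[m] | m <- take i u] (f * 'X_[nth 0%MM u i])
        <-> in_ideal [seq 'X_k | k <- enum S] f.

Definition va : 'I_6 := @Ordinal 6 0 isT.
Definition vb : 'I_6 := @Ordinal 6 1 isT.
Definition vp : 'I_6 := @Ordinal 6 2 isT.
Definition vq : 'I_6 := @Ordinal 6 3 isT.
Definition vx : 'I_6 := @Ordinal 6 4 isT.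
Definition vz : 'I_6 := @Ordinal 6 5 isT.

Definition edgesG : seq ('I_6 * 'I_6) :=
  [:: (va, vb); (va, vp); (va, vx); (vb, vx); (vb, vq);
      (vx, vp); (vx, vq); (vp, vz); (vq, vz)].

Definition edge_ideal_gens (K : fieldType) : seq {mpoly K[6]} :=
  [seq 'X_e.1 * 'X_e.2 | e <- edgesG].

Definition ideal_power_gens (K : fieldType) (n : nat) (gs : seq {mpoly K[n]})
    (s : nat) : seq {mpoly K[n]} :=
  [seq \prod_(j < s) gs`_(f j) | f : {ffun 'I_s -> 'I_(size gs)} <- enum {ffun 'I_s -> 'I_(size gs)}].

From mathcomp Require Import all_boot all_order all_algebra.
From mathcomp Require Import mpoly zify.
Set Implicit Arguments. Unset Strict Implicit. Unset Printing Implicit Defensive.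
Import Order.TTheory GRing.Theory.

(* The minimal generators of I(G)^s are the products of s edges, and these are
   exactly the lattice points of a polytope: total degree 2s, at most s on each
   of the independent sets {a,z}, {a,q}, {b,p}, {b,z}, {p,q}, {x,z}, and
   z <= p + q.  For an equigenerated monomial ideal, linear quotients follow
   from an exchange property of a total order on the generators: whenever u
   comes after v, there is a variable x_l with u_l < v_l and a generator
   w | u x_l that comes before u.  Such an order is given by a key sorted
   decreasingly: larger x first; for x > 0 lexicographically by (p, q, z, a);
   for x = 0, where the generators are those of the s-th power of the 5-cycle
   a-b-q-z-p, by z, then by whether the edges bq and pa occur, then by
   (a, b, q). *)

Notation monomials K ms := [seq ('X_[g] : {mpoly K[_]}) | g <- ms].

Section MonomialIdeals.
Variables (K : fieldType) (n : nat).
Implicit Types (gs : seq {mpoly K[n]}) (ms : seq 'X_{1..n}) (m : 'X_{1..n}).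

Local Open Scope ring_scope.

Lemma in_ideal0 gs : in_ideal gs 0.
Proof. by exists (fun=> 0); rewrite big1 // => i _; rewrite mul0r. Qed.

Lemma in_idealD gs f g : in_ideal gs f -> in_ideal gs g -> in_ideal gs (f + g).
Proof.
move=> [c ->] [c' ->]; exists (fun i => c i + c' i).
by rewrite -big_split; apply: eq_bigr => i _; rewrite mulrDl.
Qed.

Lemma in_idealMl gs h f : in_ideal gs f -> in_ideal gs (h * f).
Proof.
move=> [c ->]; exists (fun i => h * c i).
by rewrite mulr_sumr; apply: eq_bigr => i _; rewrite mulrA.
Qed.

Lemma in_ideal_mem gs g : g \in gs -> in_ideal gs g.
Proof.
move=> gs_g; have ig : (index g gs < size gs)%N by rewrite index_mem.
exists (fun i => (val i == index g gs)%:R).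
rewrite (bigD1 (Ordinal ig)) //= eqxx mul1r nth_index // big1 ?addr0 // => i.
by rewrite -val_eqE => /negPf ->; rewrite mul0r.
Qed.

Lemma in_ideal_sub gs hs f : {subset gs <= hs} -> in_ideal gs f -> in_ideal hs f.
Proof.
move=> sub_gs [c ->]; apply: (big_ind (in_ideal hs)); [exact: in_ideal0|exact: in_idealD|].
by move=> i _; apply/in_idealMl/in_ideal_mem/sub_gs/mem_nth.
Qed.

Lemma in_ideal_eq_mem gs hs f : gs =i hs -> in_ideal gs f <-> in_ideal hs f.
Proof. by move=> eq_gs; split; apply: in_ideal_sub => g; rewrite eq_gs. Qed.

Definition has_divisor ms m := has (fun g => (g <= m)%MM) ms.

Lemma in_monomial_idealP ms f :
  in_ideal (monomials K ms) f <-> {in msupp f, forall m, has_divisor ms m}.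
Proof.
split=> [[c ->] m|].
  apply: contraTT => /hasPn ndiv; rewrite mcoeff_msupp negbK raddf_sum.
  apply/eqP/big1 => i _; have ims : (i < size ms)%N by rewrite -(size_map (mpolyX K)).
  rewrite (nth_map 0%MM) //; apply/eqP; rewrite -[_ == 0]negbK -mcoeff_msupp.
  rewrite (perm_mem (msuppMX _ _)); apply/mapP => -[m' _ def_m].
  by have := ndiv _ (mem_nth 0%MM ims); rewrite def_m lem_addr.
rewrite {2}(mpolyE f); elim: (msupp f) => [|m r IHr] rdiv.
  by rewrite big_nil; apply: in_ideal0.
rewrite big_cons; apply: in_idealD; last by apply: IHr => m' r_m'; rewrite rdiv // inE r_m' orbT.
have /hasP[g ms_g le_gm] := rdiv m (mem_head _ _).
rewrite -[X in 'X_[X]](submK le_gm) mpolyXD scalerAl.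
by apply/in_idealMl/in_ideal_mem/map_f.
Qed.

Lemma in_monomial_ideal_colon ms ns u f :
    (forall m, has_divisor ms (u + m) = has_divisor ns m) ->
  in_ideal (monomials K ms) (f * 'X_[u]) <-> in_ideal (monomials K ns) f.
Proof.
move=> colon; rewrite !in_monomial_idealP; split=> fdiv m.
  by move=> f_m; rewrite -colon fdiv // (perm_mem (msuppMX _ _)) map_f.
by rewrite (perm_mem (msuppMX _ _)) => /mapP[m' f_m' ->]; rewrite colon fdiv.
Qed.

Lemma mon_dvdE m1 m2 : mon_dvd m1 m2 = (m1 <= m2)%MM.
Proof. exact/forallP/mnm_lepP. Qed.

Lemma lem_mdeg m1 m2 : (m1 <= m2)%MM -> (mdeg m1 <= mdeg m2)%N.
Proof. by move=> le_m12; rewrite -(submK le_m12) mdegD leq_addl. Qed.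

Lemma lem_mdeg_eq m1 m2 : (m1 <= m2)%MM -> mdeg m1 = mdeg m2 -> m1 = m2.
Proof.
move=> le_m12 deg_eq; suff /eqP-m21 : (m2 - m1 == 0)%MM.
  by rewrite -(submK le_m12) m21 add0m.
by rewrite -mdeg_eq0 -(eqn_add2r (mdeg m1)) -mdegD submK // deg_eq.
Qed.

Lemma lem_mnm1D m i j : i != j -> (0 < m i)%N -> (0 < m j)%N -> (U_(i) + U_(j) <= m)%MM.
Proof.
move=> neq_ij mi_pos mj_pos; apply/mnm_lepP => c; rewrite mnmDE !mnm1E.
case: (i =P c) => [<-|_]; case: (j =P _) => [j_eq|_] //=.
  by rewrite j_eq eqxx in neq_ij.
by rewrite -j_eq.
Qed.

Lemma min_mon_gen_equideg ms d : {in ms, forall g, mdeg g = d} ->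
  forall m, min_mon_gen (monomials K ms) m <-> m \in ms.
Proof.
have in_idealX m : in_ideal (monomials K ms) 'X_[m] <-> has_divisor ms m.
  rewrite in_monomial_idealP msuppX.
  by split=> [/(_ m (mem_head _ _))|? _ /[1!inE]/eqP->].
move=> deg_ms m; split=> [[/in_idealX/hasP[g ms_g le_gm] min_m]|ms_m].
  by rewrite -(min_m g) ?mon_dvdE //; apply/in_idealX/hasP; exists g => //; apply: lepm_refl.
split=> [|m' /in_idealX/hasP[g ms_g le_gm']].
  by apply/in_idealX/hasP; exists m => //; apply: lepm_refl.
rewrite mon_dvdE => le_m'm; have le_gm := lepm_trans le_gm' le_m'm.
have eq_gm := lem_mdeg_eq le_gm (etrans (deg_ms g ms_g) (esym (deg_ms m ms_m))).
have /eqP-deg_m'm : mdeg m' == mdeg m by rewrite eqn_leq (lem_mdeg le_m'm) -eq_gm lem_mdeg.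
exact: lem_mdeg_eq le_m'm deg_m'm.
Qed.

Definition power_monomials ms s : seq 'X_{1..n} :=
  [seq (\sum_(j < s) nth 0%MM ms (f j))%MM
  | f : {ffun 'I_s -> 'I_(size ms)} <- enum {ffun 'I_s -> 'I_(size ms)}].

Lemma mem_ideal_power_gens ms s :
  ideal_power_gens (monomials K ms) s =i monomials K (power_monomials ms s).
Proof.
have size_monomials : size (monomials K ms) = size ms by rewrite size_map.
have prod_monomials (f : 'I_s -> nat) : (forall j, f j < size ms)%N ->
    \prod_(j < s) (monomials K ms)`_(f j) = 'X_[\sum_(j < s) nth 0%MM ms (f j)].
  by move=> f_lt; rewrite -mprodXE; apply: eq_bigr => j _; rewrite (nth_map 0%MM).
move=> g; apply/mapP/mapP => -[_ /mapP[f _ ->] ->].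
- pose f' := [ffun j => cast_ord size_monomials (f j)].
  exists (\sum_(j < s) nth 0%MM ms (f' j))%MM; first exact/map_f/mem_enum.
  rewrite prod_monomials => [|j]; last by rewrite -size_monomials.
  by congr mpolyX; apply: eq_bigr => j _; rewrite ffunE.
- pose f' := [ffun j => cast_ord (esym size_monomials) (f j)].
  exists f'; first exact: mem_enum.
  rewrite prod_monomials => [|j]; last by rewrite ffunE /=.
  by congr mpolyX; apply: eq_bigr => j _; rewrite ffunE.
Qed.

Lemma mem_power_monomials0 ms m : (m \in power_monomials ms 0) = (m == 0%MM).
Proof.
apply/mapP/eqP => [[f _ ->]|->]; first by rewrite big_ord0.
exists [ffun j : 'I_0 => Ordinal (leq_trans (ltn_ord j) (leq0n (size ms)))].
  exact: mem_enum.
by rewrite big_ord0.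
Qed.

Lemma mem_power_monomialsS ms s m :
  m \in power_monomials ms s.+1 <->
  exists2 g, g \in ms & exists2 m', m' \in power_monomials ms s & m = (g + m')%MM.
Proof.
split=> [/mapP[f _ ->]|[g ms_g [_ /mapP[f _ ->] ->]]].
  exists (nth 0%MM ms (f ord0)); first exact: mem_nth.
  exists (\sum_(j < s) nth 0%MM ms (f (lift ord0 j)))%MM; last by rewrite big_ord_recl.
  apply/mapP; exists [ffun j => f (lift ord0 j)]; first exact: mem_enum.
  by apply: eq_bigr => j _; rewrite ffunE.
have g_lt : (index g ms < size ms)%N by rewrite index_mem.
apply/mapP; exists [ffun j => if unlift ord0 j is Some j' then f j' else Ordinal g_lt].
  exact: mem_enum.
rewrite big_ord_recl ffunE unlift_none /= nth_index //; congr (_ + _)%MM.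
by apply: eq_bigr => j _; rewrite ffunE liftK.
Qed.

Lemma mdeg_power_monomials ms d s : {in ms, forall g, mdeg g = d} ->
  {in power_monomials ms s, forall m, mdeg m = (d * s)%N}.
Proof.
move=> deg_ms; elim: s => [|s IHs] m.
  by rewrite mem_power_monomials0 muln0 => /eqP->; rewrite mdeg0.
by case/mem_power_monomialsS=> g ms_g [m' pm_m' ->]; rewrite mdegD deg_ms // IHs // mulnS.
Qed.

End MonomialIdeals.

Lemma has_linear_quotients_eq_mem (K : fieldType) n (gs hs : seq {mpoly K[n]}) :
  gs =i hs -> has_linear_quotients gs -> has_linear_quotients hs.
Proof.
move=> eq_gs [u [u_uniq [mem_u colon_u]]].
have min_eq m : min_mon_gen gs m <-> min_mon_gen hs m.
  by rewrite /min_mon_gen; setoid_rewrite (in_ideal_eq_mem _ eq_gs).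
by exists u; split=> //; split=> // m; rewrite -min_eq.
Qed.

Section LinearQuotientsByKey.
Variables (K : fieldType) (n : nat) (disp : Order.disp_t) (T : orderType disp).
Variables (ms : seq 'X_{1..n}) (deg : nat) (key : 'X_{1..n} -> T).
Hypothesis mdeg_ms : {in ms, forall m, mdeg m = deg}.
Hypothesis key_inj : {in ms &, injective key}.
Hypothesis key_exchange : {in ms &, forall u v, (key u < key v)%O ->
  exists l : 'I_n, exists2 w, w \in ms &
    [/\ (u l < v l)%N, (w <= u + U_(l))%MM & (key u < key w)%O]}.

Let us := sort (fun x y => key y <= key x)%O (undup ms).

Let mem_us m : (m \in us) = (m \in ms).
Proof. by rewrite mem_sort mem_undup. Qed.

Let uniq_us : uniq us.
Proof. by rewrite sort_uniq undup_uniq. Qed.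

Lemma key_nth_ltE i j : (i < size us)%N -> (j < size us)%N ->
  (key (nth 0%MM us i) < key (nth 0%MM us j))%O = (j < i)%N.
Proof.
have sorted_us : sorted (fun x y => key y <= key x)%O us.
  by apply: sort_sorted => x y; apply: le_total.
have le_trans_key : transitive (fun x y => key y <= key x)%O.
  by move=> y x z le_yx le_zy; apply: le_trans le_zy le_yx.
move=> ilt jlt; have [lt_ji|lt_ij|->] := ltngtP j i; last by rewrite ltxx.
  rewrite lt_neqAle (sorted_ltn_nth le_trans_key 0%MM sorted_us) ?inE // andbT.
  apply/eqP => /key_inj; rewrite -!mem_us !mem_nth // => /(_ isT isT) /eqP.
  by rewrite nth_uniq // eq_sym (ltn_eqF lt_ji).
by rewrite ltNge (sorted_ltn_nth le_trans_key 0%MM sorted_us) ?inE.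
Qed.

Lemma mem_take_key i w : (i < size us)%N -> w \in ms ->
  (w \in take i us) = (key (nth 0%MM us i) < key w)%O.
Proof.
move=> ilt; rewrite -mem_us => w_us; rewrite in_take_leq ?(ltnW ilt) //.
by rewrite -{2}(nth_index 0%MM w_us) key_nth_ltE ?index_mem.
Qed.

Theorem linear_quotients_of_key_exchange : has_linear_quotients (monomials K ms).
Proof.
exists us; split=> //; split=> [m|i /andP[_ ilt]].
  by rewrite mem_us; split=> /(min_mon_gen_equideg K mdeg_ms).
set ui := nth 0%MM us i; have ui_ms : ui \in ms by rewrite -mem_us mem_nth.
set S := [set l : 'I_n | has_divisor (take i us) (ui + U_(l))].
exists S => f; rewrite (map_comp (fun m => 'X_[m]) (fun k => U_(k)%MM)).
apply: in_monomial_ideal_colon => m.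
apply/hasP/hasP => [[g g_take le_g]|[_ /mapP[l /[!mem_enum]/[!inE] l_S ->] le_lm]].
  have g_ms : g \in ms by rewrite -mem_us (mem_take g_take).
  have lt_ui_g : (key ui < key g)%O by rewrite -mem_take_key.
  have [l [w w_ms [lt_l le_w lt_w]]] := key_exchange ui_ms g_ms lt_ui_g.
  exists U_(l)%MM.
    by apply/map_f; rewrite mem_enum inE; apply/hasP; exists w; rewrite ?mem_take_key.
  by rewrite lep1mP; move/mnm_lepP: le_g => /(_ l); rewrite mnmDE; lia.
have /hasP[w w_take le_w] := l_S; exists w => //.
apply: lepm_trans le_w _; apply/mnm_lepP => c.
by move/mnm_lepP: le_lm => /(_ c); rewrite !mnmDE leq_add2l.
Qed.

End LinearQuotientsByKey.

Definition edge_monomials : seq 'X_{1..6} := [seq (U_(e.1) + U_(e.2))%MM | e <- edgesG].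

Lemma edge_ideal_gensE (K : fieldType) : edge_ideal_gens K = monomials K edge_monomials.
Proof. by rewrite -map_comp; apply: eq_map => e; rewrite /= mpolyXD. Qed.

Lemma ord6_ind (P : 'I_6 -> Prop) :
  P va -> P vb -> P vp -> P vq -> P vx -> P vz -> forall c, P c.
Proof.
by move=> ? ? ? ? ? ? [[|[|[|[|[|[|//]]]]]] c_lt]; rewrite (bool_irrelevance c_lt isT).
Qed.

Definition edge_polytope (s : nat) (m : 'X_{1..6}) : bool :=
  [&& m va + m vb + m vp + m vq + m vx + m vz == 2 * s,
      m vz <= m vp + m vq, m va + m vz <= s, m va + m vq <= s,
      m vb + m vp <= s, m vb + m vz <= s, m vp + m vq <= s & m vx + m vz <= s].

Lemma edge_polytopeD s e m : e \in edgesG -> edge_polytope s m ->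
  edge_polytope s.+1 (U_(e.1) + U_(e.2) + m)%MM.
Proof.
rewrite /edge_polytope !mnmDE !mnm1E => edge_e.
move=> /and5P[pm1 pm2 pm3 pm4 /and4P[pm5 pm6 pm7 pm8]]; move: e edge_e; apply/allP.
by rewrite /=; repeat (apply/andP; split); lia.
Qed.

Lemma mnm_sub_edgeE (m : 'X_{1..6}) (i j c : 'I_6) :
  (m - (U_(i) + U_(j)))%MM c = m c - (i == c) - (j == c).
Proof. by rewrite mnmBE mnmDE !mnm1E subnDA. Qed.

Ltac remove_edge i j :=
  exists (i, j); first by []; rewrite /edge_polytope !mnm_sub_edgeE /=; split; lia.

Lemma edge_polytope_split s m : edge_polytope s.+1 m ->
  exists2 e, e \in edgesG &
    [/\ 0 < m e.1, 0 < m e.2 & edge_polytope s (m - (U_(e.1) + U_(e.2)))%MM].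
Proof.
rewrite /edge_polytope => pm.
have [?|?] := posnP (m vz); have [?|?] := posnP (m vp).
- have [?|?] := leqP s.+1 (m va + m vq); last by remove_edge vb vx.
  have [?|?] := posnP (m va); have [?|?] := posnP (m vb).
  + by remove_edge vx vq.
  + by remove_edge vb vq.
  + by remove_edge va vx.
  + by remove_edge va vb.
- have [?|?] := leqP s.+1 (m va + m vq); [by remove_edge va vp|by remove_edge vx vp].
- by remove_edge vq vz.
- have [?|?] := leqP s.+1 (m va + m vq); [by remove_edge va vp|by remove_edge vp vz].
Qed.

Lemma mem_edge_power s m :
  (m \in power_monomials edge_monomials s) = edge_polytope s m.
Proof.
elim: s m => [|s IHs] m.
  rewrite mem_power_monomials0; apply/eqP/idP => [->|pm].
    by rewrite /edge_polytope !mnm0E.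
  by apply/mnmP; apply: ord6_ind; rewrite mnm0E; move: pm; rewrite /edge_polytope; lia.
apply/idP/idP => [/mem_power_monomialsS[_ /mapP[e edge_e ->] [m' pm' ->]]|pm].
  by rewrite edge_polytopeD // -IHs.
have [e edge_e [e1_pos e2_pos pm']] := edge_polytope_split pm.
apply/mem_power_monomialsS; exists (U_(e.1) + U_(e.2))%MM; first by apply/mapP; exists e.
exists (m - (U_(e.1) + U_(e.2)))%MM; first by rewrite IHs.
rewrite addmC submK // lem_mnm1D //.
by move: e edge_e {e1_pos e2_pos pm'}; apply/allP.
Qed.

(* On the layer x = 0 the number of edges bq (resp. pa) in a product of s
   edges is s - a - z (resp. s - b - z). *)
Definition edge_key (s : nat) (m : 'X_{1..6}) : seqlexi nat :=
  if 0 < m vx then [:: 1; m vx; m vp; m vq; m vz; m va]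
  else [:: 0; m vz; (m va + m vz < s : nat); (m vb + m vz < s : nat); m va; m vb; m vq].

Lemma edge_key_inj s : {in power_monomials edge_monomials s &, injective (edge_key s)}.
Proof.
move=> u v; rewrite !mem_edge_power /edge_polytope /edge_key => pu pv.
by case: ifP => xu; case: ifP => xv // eq_key; apply/mnmP; apply: ord6_ind; case: eq_key; lia.
Qed.

Lemma mnm_exchangeE (m : 'X_{1..6}) (l t c : 'I_6) :
  (m + U_(l) - U_(t))%MM c = m c + (l == c) - (t == c).
Proof. by rewrite mnmBE mnmDE !mnm1E. Qed.

Definition exchange_step s (u v : 'X_{1..6}) :=
  exists l t : 'I_6, [/\ u l < v l, edge_polytope s (u + U_(l) - U_(t))%MM
                       & (edge_key s u < edge_key s (u + U_(l) - U_(t))%MM)%O].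

Ltac exchange_by l t :=
  exists l, t; rewrite /edge_polytope /edge_key !mnm_exchangeE /= ?addn0 ?subn0;
  split; [lia | lia | repeat (case: ifP => ?); rewrite ?ltxi_cons ?ltxx /=; lia].

Lemma exchange_lt s u v : edge_polytope s u -> edge_polytope s v ->
  u vx < v vx -> exchange_step s u v.
Proof.
rewrite /edge_polytope => pu pv lt_x.
have [?|?] := posnP (u vz); last by exchange_by vx vz.
have [?|?] := posnP (u va); [by exchange_by vx vb|by exchange_by vx va].
Qed.

Lemma exchange_pos s u v : edge_polytope s u -> edge_polytope s v ->
  0 < u vx -> u vx = v vx ->
  ([:: u vp; u vq; u vz; u va] < [:: v vp; v vq; v vz; v va] :> seqlexi nat)%O ->
  exchange_step s u v.
Proof.
rewrite /edge_polytope !ltxi_cons ltxx => pu pv x_pos eq_x lt_uv.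
have [?|?] := leqP (v vq) (u vq); last first.
  by have [?|?] := posnP (u va); [exchange_by vq vb|exchange_by vq va].
have [?|?] := posnP (u vb).
  have [?|?] := leqP (v vp) (u vp); first by exchange_by vz va.
  by have [?|?] := posnP (u vq); [exchange_by vp va|exchange_by vp vq].
have [?|?] := leqP (v vz) (u vz).
  have [?|?] := leqP (v vp) (u vp); first by exchange_by va vb.
  have [?|?] := eqVneq (v vq) (u vq); first by exchange_by vp vb.
  by have [?|?] := leqP s (u vb + u vp); [exchange_by va vb|exchange_by vp vq].
have [?|?] := leqP (u vp + u vq) (u vz); first by exchange_by vp vb.
by have [?|?] := leqP s (u va + u vz); [exchange_by vz va|exchange_by vz vb].
Qed.

(* The hypothesis 1 < s is needed: I(C_5) itself has no linear quotients. *)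
Lemma exchange_zero s u v : 1 < s -> edge_polytope s u -> edge_polytope s v ->
  u vx = 0 -> v vx = 0 ->
  ([:: u vz; (u va + u vz < s : nat); (u vb + u vz < s : nat); u va; u vb; u vq]
     < [:: v vz; (v va + v vz < s : nat); (v vb + v vz < s : nat); v va; v vb; v vq]
     :> seqlexi nat)%O ->
  exchange_step s u v.
Proof.
rewrite /edge_polytope !ltxi_cons ltxx => s_gt1 pu pv x_u x_v lt_uv.
have [?|?] := leqP (v va) (u va); last by exchange_by va vq.
have [?|?] := leqP s (u vz); first by exchange_by vq vp.
have [?|?] := posnP (u va).
  by have [?|?] := leqP (v vq) (u vq); [exchange_by vz vb|exchange_by vq vp].
have [?|?] := leqP (v vb) (u vb).
  have [?|?] := posnP (u vb).
    by have [?|?] := leqP (v vz) (u vz); [exchange_by vq vp|exchange_by vz va].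
  have [?|?] := leqP s (u va + u vz).
    have [?|?] := leqP (v vq) (u vq); last by exchange_by vq va.
    have [?|?] := leqP (u vp + u vq) (u vz); first by exchange_by vp vb.
    by have [?|?] := leqP (v vz) (u vz); [exchange_by vp va|exchange_by vz va].
  have [?|?] := leqP (v vz) (u vz); last by exchange_by vz vb.
  by have [?|?] := leqP (v vp) (u vp); [exchange_by vq vp|exchange_by vp vb].
have [?|?] := posnP (u vq); last first.
  by have [?|?] := leqP s (u va + u vz); [exchange_by vb va|exchange_by vb vp].
have [?|?] := posnP (u vb); last first.
  by have [?|?] := leqP (v vq) (u vq); [exchange_by vb vp|exchange_by vq va].
have [?|?] := posnP (u vz); first by exchange_by vb vp.
by have [?|?] := leqP (v vq) (u vq); [exchange_by vb vp|exchange_by vq vp].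
Qed.

Lemma edge_key_exchange s : 1 < s ->
  {in power_monomials edge_monomials s &, forall u v,
    (edge_key s u < edge_key s v)%O ->
    exists l : 'I_6, exists2 w, w \in power_monomials edge_monomials s &
      [/\ u l < v l, (w <= u + U_(l))%MM & (edge_key s u < edge_key s w)%O]}.
Proof.
move=> s_gt1 u v; rewrite !mem_edge_power => pu pv lt_uv.
suff [l [t [lt_l pw lt_w]]] : exchange_step s u v.
  by exists l, (u + U_(l) - U_(t))%MM; rewrite ?mem_edge_power ?lem_subr.
move: lt_uv; rewrite /edge_key.
have [x_u|x_u] := posnP (u vx); have [x_v|x_v] := posnP (v vx); rewrite ?x_u ?x_v /= ltxi_cons.
- by rewrite lexx /=; apply: exchange_zero.
- by move=> _; apply: exchange_lt; rewrite // x_u.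
- by [].
rewrite lexx /= ltxi_cons; have [lt_x|lt_x|eq_x] := ltngtP (u vx) (v vx).
- by move=> _; apply: exchange_lt.
- by case/andP; lia.
- by rewrite eq_x lexx /=; apply: exchange_pos.
Qed.

Theorem proposition5p4 (K : fieldType) (s : nat) :
  (2 <= s)%N -> has_linear_quotients (ideal_power_gens (edge_ideal_gens K) s).
Proof.
move=> s_gt1; rewrite edge_ideal_gensE.
apply: (has_linear_quotients_eq_mem (gs := monomials K (power_monomials edge_monomials s))).
  by move=> g; rewrite mem_ideal_power_gens.
have mdeg_edges : {in edge_monomials, forall g, mdeg g = 2}.
  by move=> _ /mapP[e _ ->]; rewrite mdegD !mdeg1.
apply: (linear_quotients_of_key_exchange K (key := edge_key s)).
- exact: mdeg_power_monomials mdeg_edges.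
- exact: edge_key_inj.
- exact: edge_key_exchange.
Qed.
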